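(* Let $(G,k)$ be an instance of PITVD, let $S\subseteq V(G)$ be such that $G-S$ is a simple (prop-int, tree)-graph, and let $V_2$ be the set of vertices of the connected components of $G-S$ that are trees. If there is a vertex $v\in S$ such that $G[\{v\}\cup V_2]$ contains a $v$-flower of order $4k+3$, then every solution of size at most $k$ for $(G,k)$ contains $v$, and $(G,k)$ is a yes-instance if and only if $(G-v,k-1)$ is a yes-instance.
   Context: PITVD: the input is an undirected multigraph $G$ (no self-loops) and an integer $k$; the question is whether there exists $X\subseteq V(G)$ with $|X|\le k$ (a solution) such that $G-X$ is a simple graph and every connected component of $G-X$ is a proper interval graph or a tree. A simple graph is a (prop-int, tree)-graph if each of its connected components is a proper interval graph or a tree. A cycle is a sequence $(v_1,\dots,v_\ell,v_1)$ with $\ell\ge2$, distinct $v_i$, consecutive vertices adjacent (for $\ell=2$ this means a double edge). A $v$-flower of order $\ell$ is a family of $\ell$ cycles each containing $v$ such that any two of them intersect only in $v$. *)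

From HB Require Import structures.
From mathcomp Require Import all_boot all_order all_algebra.
From mathcomp Require Import boolp.
Set Implicit Arguments. Unset Strict Implicit. Unset Printing Implicit Defensive.
Import Order.TTheory GRing.Theory Num.Theory.

(* A multigraph on the finite vertex type V is given by an edge multiplicity
   function m : V -> V -> nat (assumed symmetric and loopless in the theorem).
   A graph "instance" is the submultigraph induced on a vertex set A : {set V};
   G itself is A = [set: V], and G - v is A = [set: V] :\ v. *)

Section MG.
Variable V : finType.
Variable m : V -> V -> nat.

Definition adj (u w : V) : bool := 0 < m u w.

Definition simple_on (A : {set V}) : Prop :=
  forall u w, u \in A -> w \in A -> m u w <= 1.

Definition rel_on (A : {set V}) : rel V :=
  fun x y => [&& x \in A, y \in A & adj x y].

Definition component (A : {set V}) (x : V) : {set V} :=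
  [set y | connect (rel_on A) x y].

Definition connected_on (C : {set V}) : Prop :=
  forall x y, x \in C -> y \in C -> connect (rel_on C) x y.

(* A cycle (v_1,...,v_l,v_1), l >= 2, distinct vertices, consecutive vertices
   adjacent; for l = 2 this means a double edge.  All vertices lie in A
   (so it is a cycle of G[A]). *)
Definition is_cycle (A : {set V}) (s : seq V) : bool :=
  [&& 2 <= size s, uniq s, all (fun x => x \in A) s &
      path.cycle (fun x y => if size s == 2 then 2 <= m x y else 1 <= m x y) s].

Definition tree_on (C : {set V}) : Prop :=
  C != set0 /\ connected_on C /\ forall s, ~~ is_cycle C s.

Definition prop_int_on (C : {set V}) : Prop :=
  exists l r : V -> rat,
    (forall x, x \in C -> l x <= r x)%R /\
    (forall x y, x \in C -> y \in C -> x != y ->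
       (adj x y <-> ((l x <= r y) && (l y <= r x))%R)) /\
    (forall x y, x \in C -> y \in C ->
       ~ [/\ (l x <= l y)%R, (r y <= r x)%R & (l x, r x) != (l y, r y)]).

Definition is_deletion_set (A X : {set V}) : Prop :=
  X \subset A /\ simple_on (A :\: X) /\
  forall x, x \in A :\: X ->
    prop_int_on (component (A :\: X) x) \/ tree_on (component (A :\: X) x).

(* (G[A], k) is a yes-instance of PITVD (k an integer, possibly negative) *)
Definition yes_instance (A : {set V}) (k : int) : Prop :=
  exists X : {set V}, is_deletion_set A X /\ (#|X|%:Z <= k)%R.

Definition tree_part (S : {set V}) : {set V} :=
  [set x in ~: S | `[< tree_on (component (~: S) x) >]].

Definition flower (A : {set V}) (v : V) (l : nat) : Prop :=
  exists cs : 'I_l -> seq V,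
    (forall i, is_cycle A (cs i) /\ v \in cs i) /\
    (forall i j, i != j -> forall x, x \in cs i -> x \in cs j -> x = v).

End MG.

From HB Require Import structures.
From mathcomp Require Import all_boot all_order all_algebra.
From mathcomp Require Import boolp zify.
Set Implicit Arguments. Unset Strict Implicit. Unset Printing Implicit Defensive.
Import Order.TTheory.

(* Suppose a solution X with |X| <= k avoids v.  Distinct petals of the flower
   meet only in v, so at most |X| of them meet X and at least three survive in
   G - X, inside the component C of v.  C contains a cycle, so it is a proper
   interval graph, not a tree; as G - X is simple, each surviving petal has
   length at least 3 and yields two neighbours of v in the tree part, different
   petals yielding different neighbours: at least six in all.  But in a proper
   interval graph every neighbour's interval contains an endpoint of v's
   interval, so the neighbourhood of v is covered by two cliques, and the tree
   part is triangle-free: at most four such neighbours.  Once v lies in every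
   small solution, deleting v and decrementing k is an equivalence. *)


Lemma card_bigcup_disjoint (I T : finType) (P : {pred I}) (F : I -> {set T}) :
  {in P &, forall i j, i != j -> [disjoint F i & F j]} ->
  #|\bigcup_(i in P) F i| = \sum_(i in P) #|F i|.
Proof.
move=> disjF; rewrite -big_enum -[RHS]big_enum.
have: {subset enum P <= P} by move=> i; rewrite mem_enum.
elim: (enum P) (enum_uniq P) => [|i r IHr] /=; first by rewrite !big_nil cards0.
case/andP=> ir r_uniq rP; rewrite !big_cons -IHr // => [|j rj]; last first.
  by apply: rP; rewrite inE rj orbT.
rewrite cardsU disjoint_setI0 ?cards0 ?subn0 // bigcup_seq.
apply: bigcup_disjoint => j rj; apply: disjF; rewrite ?rP ?inE ?rj ?eqxx ?orbT //.
by apply: contraNneq ir => ->.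
Qed.

Section Multigraph.
Variables (V : finType) (m : V -> V -> nat).
Hypothesis m_sym : forall u w, m u w = m w u.

Lemma simple_cycle_nbrs A s v : simple_on m A -> is_cycle m A s -> v \in s ->
  exists a b, [/\ a \in s, b \in s, a != v, b != v & [/\ a != b, adj m v a & adj m v b]].
Proof.
move=> simA /and4P[s_ge2 s_uniq /allP sA s_cyc] sv.
have [i t def_s] := rot_to sv.
have size_s : size s = (size t).+1 by rewrite -(size_rot i) def_s.
have ts x : x \in t -> x \in s by rewrite -(mem_rot i s) def_s inE => ->; rewrite orbT.
move: s_uniq s_cyc; rewrite -(rot_uniq i) -(rot_cycle i) def_s size_s.
case: t def_s size_s ts => [|a [|c t]] def_s size_s ts; first by rewrite size_s in s_ge2.
  move=> _ /= /andP[va _].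
  have := simA v a (sA v sv) (sA a (ts a (mem_head _ _))).
  by rewrite leqNgt (leq_trans _ va).
rewrite /= inE negb_or => /and3P[/andP[nva vNt] aNt _].
rewrite /cycle rcons_path /= => /and4P[va _ _ lastv].
have last_t : last c t \in c :: t by apply: mem_last.
exists a, (last c t); split.
- exact/ts/mem_head.
- by apply: ts; rewrite inE last_t orbT.
- by rewrite eq_sym.
- by apply: contraNneq vNt => <-.
- by split=> //; [apply: contraNneq aNt => -> | rewrite /adj m_sym].
Qed.

Lemma is_cycle_component A s x :
  is_cycle m A s -> x \in s -> is_cycle m (component m A x) s.
Proof.
case/and4P=> s_ge2 s_uniq sA s_cyc xs; apply/and4P; split=> //.
apply/allP=> y ys; rewrite inE; apply: (connect_cycle _ xs ys).
apply: (sub_in_cycle _ sA s_cyc) => z w zA wA /=.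
by rewrite /rel_on zA wA /adj; case: ifP => _; apply: leq_trans.
Qed.

Lemma tree_part_triangle_free S a b c :
  a \in tree_part m S -> b \in tree_part m S -> c \in tree_part m S ->
  [/\ a != b, b != c & c != a] -> adj m a b -> adj m b c -> adj m c a -> False.
Proof.
rewrite !inE => /andP[aS /asboolP[_ [_ acyclic]]] /andP[bS _] /andP[cS _].
move=> [nab nbc nca] ab bc ca.
have comp_a x : x \notin S -> adj m a x -> x \in component m (~: S) a.
  by move=> xS ax; rewrite inE connect1 // /rel_on !inE aS xS.
have aC : a \in component m (~: S) a by rewrite inE connect0.
have bC := comp_a b bS ab.
have cC : c \in component m (~: S) a by rewrite comp_a // /adj m_sym.
apply: (negP (acyclic [:: a; b; c])); rewrite /adj in ab bc ca.
by rewrite /is_cycle /= aC bC cC !inE negb_or nab (eq_sym a c) nca nbc ab bc ca.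
Qed.

Definition tree_nbrs (S C : {set V}) (v : V) : {set V} :=
  [set x in C :&: tree_part m S | (x != v) && adj m v x].

Lemma tree_nbrsP (S C : {set V}) (v x : V) :
  reflect [/\ x \in C, x \in tree_part m S, x != v & adj m v x] (x \in tree_nbrs S C v).
Proof. by rewrite /tree_nbrs in_set in_setI -andbA; apply: and4P. Qed.

Section ProperInterval.
Variables (C : {set V}) (l r : V -> rat) (v : V).
Hypothesis adj_iff : forall x y, x \in C -> y \in C -> x != y ->
  (adj m x y <-> ((l x <= r y) && (l y <= r x))%R).
Hypothesis proper : forall x y, x \in C -> y \in C ->
  ~ [/\ (l x <= l y)%R, (r y <= r x)%R & (l x, r x) != (l y, r y)].
Hypothesis vC : v \in C.

Lemma prop_int_adj_of_common_point x y p : x \in C -> y \in C -> x != y ->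
  (l x <= p <= r x)%R -> (l y <= p <= r y)%R -> adj m x y.
Proof.
move=> xC yC nxy /andP[lx_p p_rx] /andP[ly_p p_ry]; apply/(adj_iff xC yC nxy).
by rewrite (le_trans lx_p p_ry) (le_trans ly_p p_rx).
Qed.

Lemma prop_int_nbr_interval a : a \in C -> a != v -> adj m v a ->
  (l a <= l v <= r a)%R \/ (l a <= r v <= r a)%R.
Proof.
move=> aC nav /(adj_iff vC aC); rewrite eq_sym nav => /(_ isT) /andP[lv_ra la_rv].
case: (boolP (l a <= l v)%R) => [_ | ]; [by left | rewrite -ltNge => lv_la; right].
rewrite la_rv /=; apply: contraT; rewrite -ltNge => ra_rv.
exfalso; apply: (proper vC aC); split; [exact: ltW | exact: ltW |].
by apply: contraTneq lv_la => -[-> _]; rewrite ltxx.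
Qed.

Lemma card_tree_nbrs_le4 S : #|tree_nbrs S C v| <= 4.
Proof.
pose through p := [set x | (l x <= p <= r x)%R].
have clique_le2 p : #|tree_nbrs S C v :&: through p| <= 2.
  rewrite leqNgt; apply/card_gt2P => -[x [y [z [[]]]]].
  move=> /setIP[/tree_nbrsP[xC xT _ _] xp] /setIP[/tree_nbrsP[yC yT _ _] yp].
  move=> /setIP[/tree_nbrsP[zC zT _ _] zp] [nxy nyz nzx]; rewrite !inE in xp yp zp.
  apply: (tree_part_triangle_free xT yT zT (And3 nxy nyz nzx)).
  - exact: prop_int_adj_of_common_point xp yp.
  - exact: prop_int_adj_of_common_point yp zp.
  - exact: prop_int_adj_of_common_point zp xp.
have cover : tree_nbrs S C v \subset through (l v) :|: through (r v).
  apply/subsetP => a /tree_nbrsP[aC _ nav va].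
  by rewrite !inE; apply/orP; apply: prop_int_nbr_interval.
rewrite -(setIidPl cover) setIUr.
exact: leq_trans (leq_card_setU _ _) (leq_add (clique_le2 _) (clique_le2 _)).
Qed.

End ProperInterval.

Lemma petal_tree_nbrs S B s v : simple_on m B -> is_cycle m B s -> v \in s ->
  {subset s <= v |: tree_part m S} ->
  1 < #|tree_nbrs S (component m B v) v :&: [set x in s]|.
Proof.
move=> simB sB vs s_tree; have /and4P[_ _ /allP sC _] := is_cycle_component sB vs.
have [a [b [a_s b_s nav nbv [nab va vb]]]] := simple_cycle_nbrs simB sB vs.
have nbr x : x \in s -> x != v -> adj m v x ->
    x \in tree_nbrs S (component m B v) v :&: [set x in s].
  move=> xs nxv vx; rewrite in_setI inE xs andbT; apply/tree_nbrsP; split=> //.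
  - exact: sC.
  - by move: (s_tree x xs); rewrite in_setU1 (negbTE nxv).
by apply/card_gt1P; exists a, b; split; rewrite ?nbr.
Qed.

Lemma card_petals_meeting n (cs : 'I_n -> seq V) v (X : {set V}) :
  (forall i j, i != j -> forall x, x \in cs i -> x \in cs j -> x = v) ->
  v \notin X -> #|[set i | has (mem X) (cs i)]| <= #|X|.
Proof.
move=> cs_disj vNX; set M := [set i | _].
pose f i := nth v (cs i) (find (mem X) (cs i)).
have fX i : i \in M -> f i \in X by rewrite inE => /(nth_find v).
have fcs i : i \in M -> f i \in cs i by rewrite inE has_find => /(mem_nth v).
rewrite -(@card_in_imset _ _ f); last first.
  move=> i j iM jM fij; apply: contraTeq (fX j jM) => nij.
  by rewrite -fij (cs_disj i j nij _ (fcs i iM)) // fij fcs.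
by apply/subset_leq_card/subsetP => _ /imsetP[i iM ->]; apply: fX.
Qed.

Lemma flower_center_in_deletion_set S X v n :
  is_deletion_set m [set: V] X -> #|X| + 3 <= n ->
  flower m (v |: tree_part m S) v n -> v \in X.
Proof.
case=> _ [simB compB] Xn [cs [cs_cycle cs_disj]]; apply: contraT => vNX.
set B := [set: V] :\: X; set N := tree_nbrs S (component m B v) v.
have vB : v \in B by rewrite !inE vNX.
set hit := [set i | has (mem X) (cs i)]; set good := ~: hit.
have good_ge3 : 3 <= #|good|.
  have hit_le : #|hit| <= #|X| := card_petals_meeting cs_disj vNX.
  by have := cardsC hit; rewrite card_ord -/good; lia.
have petal_in_B i : i \in good -> is_cycle m B (cs i).
  rewrite !inE => /hasPn csNX; have [/and4P[s_ge2 s_uniq _ s_cyc] _] := cs_cycle i.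
  by apply/and4P; split=> //; apply/allP => x /csNX; rewrite !inE => ->.
have [[l [r [_ [adj_iff proper]]]] | [_ [_ acyclic]]] := compB v vB; last first.
  have /card_gt0P[i /petal_in_B iB] : 0 < #|good| by apply: leq_trans good_ge3.
  by have := acyclic (cs i); rewrite is_cycle_component // (cs_cycle i).2.
have petal_nbrs_ge2 i : i \in good -> 1 < #|N :&: [set x in cs i]|.
  move=> /petal_in_B iB; have [/and4P[_ _ /allP cs_tree _] vcs] := cs_cycle i.
  exact: petal_tree_nbrs simB iB vcs cs_tree.
have petal_nbrs_disj : {in good &, forall i j, i != j ->
    [disjoint N :&: [set x in cs i] & N :&: [set x in cs j]]}.
  move=> i j _ _ nij; rewrite disjoints_subset; apply/subsetP => x.
  move=> /setIP[/tree_nbrsP[_ _ nxv _]]; rewrite !inE => xi.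
  by apply: contra nxv => /andP[_ xj]; rewrite (cs_disj i j nij x).
have vC : v \in component m B v by rewrite inE connect0.
have N_le4 : #|N| <= 4 := card_tree_nbrs_le4 adj_iff proper vC S.
have N_ge6 : 2 * 3 <= #|N|.
  apply: leq_trans (leq_mul (leqnn 2) good_ge3) _; rewrite mulnC -sum_nat_const.
  apply: (@leq_trans (\sum_(i in good) #|N :&: [set x in cs i]|)); first exact: leq_sum.
  rewrite -card_bigcup_disjoint //.
  by apply/subset_leq_card/bigcupsP => i _; apply: subsetIl.
by have := leq_trans N_ge6 N_le4.
Qed.

Lemma deletion_setD1 (A X : {set V}) v : v \in X ->
  is_deletion_set m A X -> is_deletion_set m (A :\ v) (X :\ v).
Proof.
move=> vX [XA GX]; rewrite /is_deletion_set; have -> : A :\ v :\: (X :\ v) = A :\: X.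
  by apply/setP => x; rewrite !inE; case: eqP => // ->; rewrite vX.
by split=> //; apply: setSD.
Qed.

Lemma deletion_setU1 (A Y : {set V}) v : v \in A ->
  is_deletion_set m (A :\ v) Y -> is_deletion_set m A (v |: Y).
Proof.
move=> vA [YA GY]; rewrite /is_deletion_set; have -> : A :\: (v |: Y) = A :\ v :\: Y.
  by apply/setP => x; rewrite !inE negb_or -andbA andbCA.
by split=> //; rewrite subUset sub1set vA (subset_trans YA) ?subsetDl.
Qed.

Lemma yes_instance_setD1 (A : {set V}) v (k : nat) : v \in A ->
  (forall X, is_deletion_set m A X -> #|X| <= k -> v \in X) ->
  yes_instance m A k%:Z <-> yes_instance m (A :\ v) (k%:Z - 1)%R.
Proof.
move=> vA v_in_small; split=> -[X [delX Xk]].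
- have vX : v \in X by apply: v_in_small delX _; rewrite -lez_nat.
  exists (X :\ v); split; first exact: deletion_setD1.
  by move: Xk; rewrite (cardsD1 v X) vX /=; lia.
- have vNX : v \notin X by case: delX => /subsetP XA _; apply/negP => /XA; rewrite !inE eqxx.
  exists (v |: X); split; first exact: deletion_setU1.
  by move: Xk; rewrite cardsU1 vNX /=; lia.
Qed.

End Multigraph.

Theorem lemma23 (V : finType) (m : V -> V -> nat)
  (m_sym : forall u w, m u w = m w u) (m_loopless : forall u, m u u = 0%N)
  (k : nat) (S : {set V}) (v : V) :
  is_deletion_set m [set: V] S ->
  v \in S ->
  flower m (v |: tree_part m S) v (4 * k + 3) ->
  (forall X : {set V}, is_deletion_set m [set: V] X -> #|X| <= k -> v \in X) /\
  (yes_instance m [set: V] k%:Z <-> yes_instance m ([set: V] :\ v) (k%:Z - 1)%R).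
Proof.
move=> _ _ flower_v.
have v_in_small X : is_deletion_set m [set: V] X -> #|X| <= k -> v \in X.
  by move=> delX Xk; apply: (flower_center_in_deletion_set m_sym delX _ flower_v); lia.
by split=> //; apply: yes_instance_setD1.
Qed.
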